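(* Let $t$ be a positive integer and let $G$ be a graph on $4t-1$ vertices with $\alpha(G)=2$ and $\mathrm{cm}(G)\le t-1$. Then for any triangle $v_1v_2v_3v_1$ in $G$, we have $\left|N(v_1)\cap N(v_2)\cap N(v_3)\right|\ge t+2$.
   Context: All graphs are finite and simple. $\alpha(G)$ is the independence number; $N(v)$ is the set of neighbours of $v$. A matching $M$ in $G$ is connected if for every two edges of $M$ there is an edge of $G$ joining an endpoint of one to an endpoint of the other; $\mathrm{cm}(G)$ is the maximum size of a connected matching in $G$. *)

From mathcomp Require Import all_boot all_order.
Set Implicit Arguments. Unset Strict Implicit. Unset Printing Implicit Defensive.

Definition simple_graph (T : finType) (e : rel T) : Prop :=
  symmetric e /\ irreflexive e.

Definition independent (T : finType) (e : rel T) (S : {set T}) : bool :=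
  [forall x in S, forall y in S, ~~ e x y].

Definition alpha (T : finType) (e : rel T) : nat :=
  \max_(S : {set T} | independent e S) #|S|.

Definition is_edge (T : finType) (e : rel T) (A : {set T}) : bool :=
  [exists x, exists y, (A == [set x; y]) && e x y].

Definition matching (T : finType) (e : rel T) (M : {set {set T}}) : bool :=
  [forall A in M, is_edge e A] &&
  [forall A in M, forall B in M, (A != B) ==> [disjoint A & B]].

Definition connected_matching (T : finType) (e : rel T) (M : {set {set T}}) : bool :=
  matching e M &&
  [forall A in M, forall B in M,
     (A != B) ==> [exists a in A, exists b in B, e a b]].

Definition cm (T : finType) (e : rel T) : nat :=
  \max_(M : {set {set T}} | connected_matching e M) #|M|.

Definition nbhd (T : finType) (e : rel T) (v : T) : {set T} := [set u | e v u].

From mathcomp Require Import all_boot all_order.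
From mathcomp Require Import zify.
Set Implicit Arguments. Unset Strict Implicit. Unset Printing Implicit Defensive.

(* Since alpha(G) <= 2, the non-neighbours of any vertex form a clique.  Every clique
   K has fewer than t vertices: otherwise match K greedily into the rest of the graph by edges
   that each meet K (any such matching is connected, K being a clique).  If this
   stops early, an unmatched vertex of K has no neighbour among the unmatched
   vertices R outside K, so R is a clique with at least 2t vertices, and t disjoint
   edges inside R form a connected matching as well.
   The vertices outside the common neighbourhood of the triangle are the v_i and
   their non-neighbourhoods A_i, so it suffices that |A_1 u A_2 u A_3| <= 3t - 6.
   If A_i n A_j is contained in A_k, the union splits into the cliques A_k,
   (A_i \ A_k) + {v_j, v_k} and (A_j \ A_k \ A_i) + {v_i}, each with fewer than t
   vertices.  Otherwise each pairwise intersection sticks out of the third set, and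
   inclusion-exclusion saves 3 on |A_1| + |A_2| + |A_3| <= 3t - 3. *)

Section Cliques.

Variables (T : finType) (e : rel T).

Definition clique (K : {set T}) : Prop := {in K &, forall x y, x != y -> e x y}.

Lemma cliqueS (K K' : {set T}) : K' \subset K -> clique K -> clique K'.
Proof. by move=> /subsetP sK cK x y /sK xK /sK yK; apply: cK. Qed.

Lemma clique_setU1 (K : {set T}) v :
  symmetric e -> clique K -> {in K, forall x, e v x} -> clique (v |: K).
Proof.
move=> sym cK evK x y; rewrite !in_setU1.
case: (eqVneq x v) => [-> | xv] /=; case: (eqVneq y v) => [-> | yv] //=.
- by move=> _ yK _; apply: evK.
- by move=> xK _ _; rewrite sym; apply: evK.
- exact: cK.
Qed.

End Cliques.

Section NonNeighbourhoods.

Variables (T : finType) (e : rel T).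

Definition non_nbhd (v : T) : {set T} := [set x | (x != v) && ~~ e v x].

Lemma mem_non_nbhd v x : (x \in non_nbhd v) = (x != v) && ~~ e v x.
Proof. by rewrite inE. Qed.

Lemma notin_non_nbhd v x : x \notin non_nbhd v -> x != v -> e v x.
Proof.
by rewrite mem_non_nbhd negb_and !negbK => /orP [/eqP -> | -> //]; rewrite eqxx.
Qed.

Lemma card_setC_common_nbhd a b c :
  #|~: (nbhd e a :&: nbhd e b :&: nbhd e c)|
    <= #|non_nbhd a :|: non_nbhd b :|: non_nbhd c| + 3.
Proof.
have sub : ~: (nbhd e a :&: nbhd e b :&: nbhd e c)
    \subset non_nbhd a :|: non_nbhd b :|: non_nbhd c :|: [set a; b; c].
  apply/subsetP => y; rewrite !inE.
  case: (eqVneq y a); case: (eqVneq y b); case: (eqVneq y c); rewrite ?orbT //=.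
  by case: (e a y); case: (e b y); case: (e c y).
have abc : #|[set a; b; c]| <= 3.
  by apply: leq_trans (leq_card_setU _ _).1 _; rewrite cards2 cards1; case: (a != b).
apply: leq_trans (subset_leq_card sub) _.
by apply: leq_trans (leq_card_setU _ _).1 _; rewrite leq_add2l.
Qed.

End NonNeighbourhoods.

Section AlphaTwo.

Variables (T : finType) (e : rel T).
Hypotheses (sym : symmetric e) (irr : irreflexive e) (alpha_le2 : alpha e <= 2).

Lemma independent_card_le_alpha (S : {set T}) : independent e S -> #|S| <= alpha e.
Proof. exact: (@leq_bigmax_cond _ (independent e) (fun S : {set T} => #|S|)). Qed.

Lemma common_non_nbr_adj a x y :
  x != y -> x != a -> y != a -> ~~ e a x -> ~~ e a y -> e x y.
Proof.
move=> xy xa ya nax nay; apply/negPn/negP => nxy.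
have ind : independent e [set a; x; y].
  apply/forallP => u; apply/implyP => uS; apply/forallP => w; apply/implyP => wS.
  move: uS wS; rewrite !inE => /orP [/orP [] | ] /eqP -> /orP [/orP [] | ] /eqP ->;
    by rewrite ?irr // ?nax ?nay ?nxy // sym ?nax ?nay ?nxy.
have := leq_trans (independent_card_le_alpha ind) alpha_le2.
by rewrite -setUA cardsU1 cards2 xy !inE negb_or !(eq_sym a) xa ya.
Qed.

Lemma clique_non_nbhd v : clique e (non_nbhd e v).
Proof.
move=> x y; rewrite !inE => /andP [xv nvx] /andP [yv nvy] xy.
exact: common_non_nbr_adj xy xv yv nvx nvy.
Qed.

End AlphaTwo.

Arguments clique_non_nbhd {T e} sym irr alpha_le2 v.

Section AnchoredMatchings.

Variables (T : finType) (e : rel T).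

Definition anchored_matching (K S : {set T}) (M : {set {set T}}) : Prop :=
  [/\ matching e M, cover M \subset S & {in M, forall A, A :&: K != set0}].

Lemma anchored_matching0 (K S : {set T}) : anchored_matching K S set0.
Proof.
split; last by move=> A; rewrite inE.
- by apply/andP; split; apply/forallP => A; rewrite inE.
- by rewrite /cover big_set0 sub0set.
Qed.

Lemma anchored_matchingS (K K' S S' : {set T}) (M : {set {set T}}) :
  K \subset K' -> S \subset S' -> anchored_matching K S M -> anchored_matching K' S' M.
Proof.
move=> sK sS [mM cS anch]; split => //; first exact: subset_trans sS.
move=> A /anch; apply: contraNneq => AK'.
by rewrite -subset0 -AK' setIS.
Qed.

Lemma cover_setU1 (A : {set T}) (M : {set {set T}}) : cover (A |: M) = A :|: cover M.
Proof. by rewrite /cover bigcup_setU big_set1. Qed.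

Lemma matching_disjoint (M : {set {set T}}) A B :
  matching e M -> A \in M -> B \in M -> A != B -> [disjoint A & B].
Proof.
move=> /andP [_ /forallP disj] AM BM AB.
by move: (disj A); rewrite AM => /forallP /(_ B); rewrite BM AB.
Qed.

Lemma notin_cover_setU1 (M : {set {set T}}) x y :
  x \notin cover M -> #|[set x; y] |: M| = #|M|.+1.
Proof.
move=> xM; suff nM : [set x; y] \notin M by rewrite cardsU1 nM.
by apply: contraNN xM => /bigcup_sup /subsetP; apply; rewrite !inE eqxx.
Qed.

Lemma matching_setU1 (M : {set {set T}}) x y :
  matching e M -> e x y -> x \notin cover M -> y \notin cover M ->
  matching e ([set x; y] |: M).
Proof.
move=> mM exy xM yM.
have dxy A : A \in M -> [disjoint [set x; y] & A].
  move=> /bigcup_sup /subsetP sA; rewrite disjoints_subset; apply/subsetP => z.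
  by rewrite !inE => /orP [] /eqP ->; [apply: contra xM | apply: contra yM]; apply: sA.
apply/andP; split; apply/forallP => A; apply/implyP; rewrite in_setU1.
  case/orP => [/eqP -> | AM].
    by apply/existsP; exists x; apply/existsP; exists y; rewrite eqxx.
  by move: mM => /andP [/forallP edges _]; apply: (implyP (edges A)).
move=> AM; apply/forallP => B; apply/implyP; rewrite in_setU1 => BM; apply/implyP => AB.
case/orP: AM => [/eqP eA | AM]; case/orP: BM => [/eqP eB | BM].
- by rewrite eA eB eqxx in AB.
- by rewrite eA; apply: dxy.
- by rewrite eB disjoint_sym; apply: dxy.
- exact: matching_disjoint mM AM BM AB.
Qed.

Lemma anchored_matching_setU1 (K S : {set T}) (M : {set {set T}}) x y :
  anchored_matching K (S :\ x :\ y) M -> e x y -> x \in K -> x \in S -> y \in S ->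
  anchored_matching K S ([set x; y] |: M) /\ #|[set x; y] |: M| = #|M|.+1.
Proof.
move=> [mM cS anch] exy xK xS yS.
have [xM yM] : x \notin cover M /\ y \notin cover M.
  by split; apply/negP => /(subsetP cS); rewrite !inE eqxx ?andbF.
split; last exact: notin_cover_setU1.
split; first exact: matching_setU1.
- have sS : S :\ x :\ y \subset S := subset_trans (subD1set _ y) (subD1set S x).
  rewrite cover_setU1 subUset (subset_trans cS sS) andbT.
  by apply/subsetP => z; rewrite !inE => /orP [] /eqP ->.
move=> A; rewrite in_setU1 => /orP [/eqP -> | /anch //].
by apply/set0Pn; exists x; rewrite !inE eqxx.
Qed.

Lemma anchored_matching_connected (K S : {set T}) (M : {set {set T}}) :
  clique e K -> anchored_matching K S M -> connected_matching e M.
Proof.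
move=> cK [mM _ anch]; apply/andP; split => //.
apply/forallP => A; apply/implyP => AM; apply/forallP => B; apply/implyP => BM.
apply/implyP => AB.
have [a] := set0Pn _ (anch A AM); rewrite inE => /andP [aA aK].
have [b] := set0Pn _ (anch B BM); rewrite inE => /andP [bB bK].
apply/existsP; exists a; rewrite aA; apply/existsP; exists b; rewrite bB /=.
apply: cK => //; apply: contraTneq bB => <-.
by rewrite (disjointFr (matching_disjoint mM AM BM AB) aA).
Qed.

Lemma connected_matching_card_le_cm (M : {set {set T}}) :
  connected_matching e M -> #|M| <= cm e.
Proof. exact: (@leq_bigmax_cond _ (connected_matching e) (fun M => #|M|)). Qed.

Lemma anchored_matching_in_clique j (K : {set T}) :
  clique e K -> 2 * j <= #|K| -> exists M, anchored_matching K K M /\ #|M| = j.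
Proof.
elim: j K => [|j IH] K cK hK.
  by exists set0; rewrite cards0; split => //; apply: anchored_matching0.
have [x xK] : exists x, x \in K by apply/card_gt0P; lia.
have [y yKx] : exists y, y \in K :\ x.
  by apply/card_gt0P; move: hK; rewrite (cardsD1 x K) xK; lia.
have [yx yK] : y != x /\ y \in K by move: yKx; rewrite !inE => /andP [].
have sK' : K :\ x :\ y \subset K := subset_trans (subD1set _ y) (subD1set K x).
have cardK : #|K| = #|K :\ x :\ y|.+2.
  by rewrite (cardsD1 x K) xK (cardsD1 y (K :\ x)) yKx.
have [M' [aM' cM']] := IH _ (cliqueS sK' cK) ltac:(lia).
have exy : e x y by apply: cK; rewrite // eq_sym.
have [aM cM] :=
  anchored_matching_setU1 (anchored_matchingS sK' (subxx _) aM') exy xK xK yK.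
by exists ([set x; y] |: M'); rewrite cM cM'.
Qed.

End AnchoredMatchings.

Section SmallCliques.

Variables (T : finType) (e : rel T) (t : nat).
Hypotheses (sym : symmetric e) (irr : irreflexive e) (alpha_le2 : alpha e <= 2).
Hypothesis cm_lt : cm e < t.

Lemma clique_card_lt_double (K : {set T}) : clique e K -> #|K| < 2 * t.
Proof.
move=> cK; rewrite ltnNge; apply/negP => /(anchored_matching_in_clique cK) [M [aM cardM]].
by have := connected_matching_card_le_cm (anchored_matching_connected cK aM); lia.
Qed.

Lemma anchored_matching_exists j (K R : {set T}) :
  clique e K -> [disjoint K & R] -> j <= #|K| -> 2 * j + 2 * t - 1 <= #|K| + #|R| ->
  exists M, anchored_matching e K (K :|: R) M /\ #|M| = j.
Proof.
elim: j K R => [|j IH] K R cK dKR hj hKR.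
  by exists set0; rewrite cards0; split => //; apply: anchored_matching0.
have [[x y] /= /andP [/andP [xK yR] exy] | noedge] :=
  pickP [pred p : T * T | (p.1 \in K) && (p.2 \in R) && e p.1 p.2].
  have sK' : K :\ x \subset K := subD1set K x.
  have cardK : #|K| = #|K :\ x|.+1 by rewrite (cardsD1 x K) xK.
  have cardR : #|R| = #|R :\ y|.+1 by rewrite (cardsD1 y R) yR.
  have dKR' : [disjoint K :\ x & R :\ y].
    exact: disjointWl sK' (disjointWr (subD1set R y) dKR).
  have [M' [aM' cM']] := IH _ _ (cliqueS sK' cK) dKR' ltac:(lia) ltac:(lia).
  have sS : K :\ x :|: R :\ y \subset (K :|: R) :\ x :\ y.
    apply/subsetP => z; rewrite !inE.
    case/orP => /andP [zx zK]; last move: zx zK => zy zR.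
      have zy : z != y by apply: contraTneq zK => ->; rewrite (disjointFl dKR yR).
      by rewrite zx zy zK.
    have zx : z != x by apply: contraTneq zR => ->; rewrite (disjointFr dKR xK).
    by rewrite zx zy zR orbT.
  have [aM cM] := anchored_matching_setU1 (anchored_matchingS sK' sS aM') exy xK
    (subsetP (subsetUl K R) _ xK) (subsetP (subsetUr K R) _ yR).
  by exists ([set x; y] |: M'); rewrite cM cM'.
have [bigK | smallK] := leqP (2 * j.+1) #|K|.
  have [M [aM cM]] := anchored_matching_in_clique cK bigK.
  by exists M; split => //; apply: anchored_matchingS aM => //; apply: subsetUl.
have [x xK] : exists x, x \in K by apply/card_gt0P; lia.
have sR : R \subset non_nbhd e x.
  apply/subsetP => y yR; rewrite inE; apply/andP; split.
    by apply: contraTneq yR => ->; rewrite (disjointFr dKR xK).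
  by apply/negP => exy; move: (noedge (x, y)); rewrite /= xK yR exy.
have := clique_card_lt_double (cliqueS sR (clique_non_nbhd sym irr alpha_le2 x)).
lia.
Qed.

Lemma clique_card_lt (K : {set T}) : 4 * t - 1 <= #|T| -> clique e K -> #|K| < t.
Proof.
move=> cardT cK; rewrite ltnNge; apply/negP => bigK.
have dK : [disjoint K & ~: K] by rewrite disjoints_subset setCK.
have [|M [aM cM]] := anchored_matching_exists cK dK bigK; first by have := cardsC K; lia.
by have := connected_matching_card_le_cm (anchored_matching_connected cK aM); lia.
Qed.

End SmallCliques.

Lemma card_setU3_le_sub3 (T : finType) (A B C : {set T}) :
  ~~ (A :&: B \subset C) -> ~~ (A :&: C \subset B) -> ~~ (B :&: C \subset A) ->
  #|A :|: B :|: C| + 3 <= #|A| + #|B| + #|C|.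
Proof.
move=> /subsetPn [x xAB _] /subsetPn [y yAC yB] /subsetPn [z zBC zA].
have AB : 0 < #|A :&: B| by apply/card_gt0P; exists x.
have ABC : 2 <= #|(A :|: B) :&: C|.
  have yz : y != z by apply: contraNneq yB => ->; move: zBC; rewrite inE => /andP [].
  have sub : [set y; z] \subset (A :|: B) :&: C.
    apply/subsetP => u; move: yAC zBC; rewrite !inE => /andP [yA yC] /andP [zB zC].
    by case/orP => /eqP ->; rewrite ?yA ?yC ?zB ?zC ?orbT.
  by move: (subset_leq_card sub); rewrite cards2 yz.
by have := cardsUI A B; have := cardsUI (A :|: B) C; lia.
Qed.

Section Triangle.

Variables (T : finType) (e : rel T) (t : nat).
Hypotheses (sym : symmetric e) (irr : irreflexive e) (alpha_le2 : alpha e <= 2).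
Hypotheses (cm_lt : cm e < t) (cardT : 4 * t - 1 <= #|T|).

Let A := non_nbhd e.

Let small_clique (K : {set T}) : clique e K -> #|K| < t :=
  clique_card_lt sym irr alpha_le2 cm_lt cardT.

Let clique_A v : clique e (A v) := clique_non_nbhd sym irr alpha_le2 v.
Arguments clique_A : clear implicits.

Lemma clique_adj_card_lt (K : {set T}) v :
  clique e K -> {in K, forall x, e v x} -> #|K|.+1 < t.
Proof.
move=> cK evK; have vK : v \notin K by apply: contraFN (irr v) => /evK.
by have := small_clique (clique_setU1 sym cK evK); rewrite cardsU1 vK.
Qed.

Lemma nested_non_nbhd_card a b c : e a b -> e b c -> e a c ->
  A b :&: A c \subset A a -> #|A a :|: A b :|: A c| + 6 <= 3 * t.
Proof.
move=> eab ebc eac /subsetP sub.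
set Pb := A b :\: A a; set Pc := A c :\: A a :\: A b.
have -> : A a :|: A b :|: A c = A a :|: Pb :|: Pc.
  apply/setP => x; rewrite !in_setU !in_setD.
  by case: (x \in A a); case: (x \in A b); case: (x \in A c).
have ecPb : {in Pb, forall x, e c x}.
  move=> x; rewrite in_setD => /andP [xa xb]; apply: notin_non_nbhd.
    by apply: contraNN xa => xc; apply: sub; rewrite in_setI xb.
  by apply: contraTneq xb => ->; rewrite mem_non_nbhd ebc andbF.
have eaPb : {in c |: Pb, forall x, e a x}.
  move=> x; rewrite in_setU1 in_setD => /orP [/eqP -> // | /andP [xa xb]].
  apply: notin_non_nbhd xa _; apply: contraTneq xb => ->.
  by rewrite mem_non_nbhd sym eab andbF.
have ebPc : {in Pc, forall x, e b x}.
  move=> x; rewrite !in_setD => /andP [xb /andP [_ xc]].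
  apply: notin_non_nbhd xb _; apply: contraTneq xc => ->.
  by rewrite mem_non_nbhd sym ebc andbF.
have cPb : clique e (c |: Pb).
  exact: clique_setU1 sym (cliqueS (subsetDl _ _) (clique_A b)) ecPb.
have cPc : clique e Pc.
  exact: cliqueS (subset_trans (subsetDl _ _) (subsetDl _ _)) (clique_A c).
have cPb_card : #|c |: Pb| = #|Pb|.+1.
  by rewrite cardsU1 in_setD [c \in A b]mem_non_nbhd ebc !andbF.
have := small_clique (clique_A a).
have := clique_adj_card_lt cPb eaPb; have := clique_adj_card_lt cPc ebPc.
have := (leq_card_setU (A a :|: Pb) Pc).1; have := (leq_card_setU (A a) Pb).1.
lia.
Qed.

Lemma triangle_non_nbhd_card a b c : e a b -> e b c -> e a c ->
  #|A a :|: A b :|: A c| + 6 <= 3 * t.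
Proof.
move=> eab ebc eac.
have [sab | nab] := boolP (A a :&: A b \subset A c).
  by rewrite setUC setUA; apply: nested_non_nbhd_card; rewrite // sym.
have [sac | nac] := boolP (A a :&: A c \subset A b).
  by rewrite setUAC setUC setUA; apply: nested_non_nbhd_card; rewrite // sym.
have [sbc | nbc] := boolP (A b :&: A c \subset A a).
  exact: nested_non_nbhd_card.
have cA v : #|A v| < t := small_clique (clique_A v).
by have := card_setU3_le_sub3 nab nac nbc; have := cA a; have := cA b; have := cA c; lia.
Qed.

End Triangle.

Theorem lemma2p2 (T : finType) (e : rel T) (t : nat) :
  simple_graph e -> 0 < t -> #|T| = 4 * t - 1 ->
  alpha e = 2 -> cm e <= t - 1 ->
  forall v1 v2 v3 : T, e v1 v2 -> e v2 v3 -> e v1 v3 ->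
  t + 2 <= #|nbhd e v1 :&: nbhd e v2 :&: nbhd e v3|.
Proof.
move=> [sym irr] t_gt0 cardT alpha2 cm_le v1 v2 v3 e12 e23 e13.
have cm_lt : cm e < t by lia.
have := triangle_non_nbhd_card sym irr (eq_leq alpha2) cm_lt (eq_leq (esym cardT))
  e12 e23 e13.
have := card_setC_common_nbhd e v1 v2 v3.
have := cardsC (nbhd e v1 :&: nbhd e v2 :&: nbhd e v3).
lia.
Qed.
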